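(* Assume the setting in the context, with a decomposition of $\mathcal X$ over $A$, a cost function $g\in\mathcal G_s$, a fixed $\alpha\in(0,1)$, and assume moreover that $A$ is invertible. Then the following are equivalent: (a) $\mathcal R(B)=\bigoplus_{i\in\mathcal I}\big[\mathcal R(B)\cap\mathcal X_i\big]$; (b) $\{(A,B|_{\mathcal E_i},g,T)\}_{i\in\mathcal I}$ is a decomposition of $(A,B,g,T)$ for every integer $T>0$; (c) $\{(A,B|_{\mathcal E_i},g,\alpha)\}_{i\in\mathcal I}$ is a decomposition of $(A,B,g,\alpha)$.
   Context: Let $\mathcal F$ be a field and $\mathcal X,\mathcal U$ finite-dimensional vector spaces over $\mathcal F$. Let $A:\mathcal X\to\mathcal X$ and $B:\mathcal U\to\mathcal X$ be linear maps with $B$ injective; $\mathcal R(B)$ is the range of $B$. Consider the system $x_{t+1}=Ax_t+Bu_t$ and a cost $g:\mathcal X\to\mathbb R_{\ge 0}$ with $g(x)=0\iff x=0$. Standing assumption: all minima appearing below are attained. Finite-horizon problem $(A,B,g,T)$ ($T>0$ integer): policies $\pi(x_0)=(\pi_t(x_0))_{t=0}^{T-1}\in\mathcal U^T$, cost $J(x_0,\pi)=\sum_{t=0}^T g(x_t)$ with $x_{t+1}=Ax_t+B\pi_t(x_0)$. Infinite-horizon problem $(A,B,g,\alpha)$ ($\alpha\in(0,1)$): policies $\pi(x_0)\in\mathcal U^{\mathbb Z_+}$, cost $J(x_0,\pi)=\sum_{t\ge0}\alpha^tg(x_t)$. In both, $J^*(x_0)=\min_\pi J(x_0,\pi)$ and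 a minimizing policy is optimal at $x_0$. In the infinite-horizon case $J^*$ satisfies $J^*(x)=g(x)+\alpha\min_{u}J^*(Ax+Bu)$. A decomposition of $\mathcal X$ over $A$ is a direct sum $\mathcal X=\mathcal X_1\oplus\cdots\oplus\mathcal X_r$ with $r>1$ and $A\mathcal X_i\subseteq\mathcal X_i$, $i\in\mathcal I=\{1,\dots,r\}$; $\rho_i:\mathcal X\to\mathcal X_i$ is the projection along the other summands. $\mathcal G_s$ is the set of $h:\mathcal X\to\mathbb R_{\ge0}$ with $h(x)=\sum_i h(\rho_i(x))$ for all $x$. $\mathcal E_i=\{u\in\mathcal U:Bu\in\mathcal X_i\}$. Subproblems $(A,B|_{\mathcal E_i},g,T)$ and $(A,B|_{\mathcal E_i},g,\alpha)$: the same problems for the system $x_{i,t+1}=Ax_{i,t}+B\bar u_{i,t}$ with states in $\mathcal X_i$ and inputs in $\mathcal E_i$; optimal costs $\bar J_i^*$, optimal policies $\bar\pi_i^*$. Definition 1: the family of subproblems is a decomposition of the original problem if for every $x\in\mathcal X$: $J^*(x)=\sum_i\bar J_i^*(\rho_i(x))$, and for every choice of optimal policies $\bar\pi_i^*(\rho_i(x))$ there exists an optimal policy $\pi^*(x)$ of the original problem with $\pi^*(x)=\sum_i\bar\pi_i^*(\rho_i(x))$ (componentwise sum). *)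

From Stdlib Require Import Reals ClassicalEpsilon.
From HB Require Import structures.
From mathcomp Require Import all_boot all_order all_algebra.
Set Implicit Arguments. Unset Strict Implicit. Unset Printing Implicit Defensive.
Import GRing.Theory.
Local Open Scope ring_scope.

Inductive ereal := EFin of R | EInf.

Definition eadd (a b : ereal) : ereal :=
  match a, b with EFin x, EFin y => EFin (Rplus x y) | _, _ => EInf end.

Definition ele (a b : ereal) : Prop :=
  match a, b with
  | EFin x, EFin y => Rle x y
  | _, EInf => True
  | EInf, EFin _ => False
  end.

(* value of a series with (nonnegative) terms f : convergent limit, or +oo *)
Definition esum (f : nat -> R) : ereal :=
  match excluded_middle_informative
          (exists l, Un_cv (fun n => sum_f_R0 f n) l) with
  | left H => EFin (proj1_sig (constructive_indefinite_description _ H))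
  | right _ => EInf
  end.

Definition is_min (T : Type) (le : T -> T -> Prop) (S : T -> Prop) (v : T) :=
  S v /\ forall w, S w -> le v w.

(* "min S": the minimum of S (meaningful when it is attained) *)
Definition min_of (T : Type) (d : T) (le : T -> T -> Prop) (S : T -> Prop) : T :=
  epsilon (inhabits d) (is_min le S).

Section Control.
Variables (F : fieldType) (X U : vectType F).

Fixpoint traj (A : 'End(X)) (B : 'Hom(U, X)) (x0 : X) (u : nat -> U) (t : nat)
  : X :=
  match t with
  | 0 => x0
  | t'.+1 => A (traj A B x0 u t') + B (u t')
  end.

(* admissible input sequences: constraint P on inputs (P = True for the
   original problem, P = E_i for the i-th subproblem) *)
Definition fadm (P : U -> Prop) (T : nat) (u : nat -> U) :=
  forall t, (t < T)%N -> P (u t).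
Definition iadm (P : U -> Prop) (u : nat -> U) := forall t, P (u t).

Definition fcost A B (g : X -> R) (T : nat) x0 u : R :=
  sum_f_R0 (fun t => g (traj A B x0 u t)) T.
Definition icost A B (g : X -> R) (alpha : R) x0 u : ereal :=
  esum (fun t => Rmult (pow alpha t) (g (traj A B x0 u t))).

Definition fopt A B g (P : U -> Prop) T x0 (u : nat -> U) :=
  fadm P T u /\ forall v, fadm P T v -> Rle (fcost A B g T x0 u) (fcost A B g T x0 v).
Definition iopt A B g alpha (P : U -> Prop) x0 (u : nat -> U) :=
  iadm P u /\ forall v, iadm P v -> ele (icost A B g alpha x0 u) (icost A B g alpha x0 v).

Definition fJstar A B g (P : U -> Prop) T x0 : R :=
  min_of R0 Rle (fun c => exists u, fadm P T u /\ c = fcost A B g T x0 u).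
Definition iJstar A B g alpha (P : U -> Prop) x0 : ereal :=
  min_of EInf ele (fun c => exists u, iadm P u /\ c = icost A B g alpha x0 u).

Definition is_decomp (A : 'End(X)) (r : nat) (Xs : 'I_r -> {vspace X}) :=
  [/\ (1 < r)%N, directv (\sum_(i < r) Xs i)%VS,
      (\sum_(i < r) Xs i)%VS = fullv & forall i, (A @: Xs i <= Xs i)%VS].

(* rho_i : projection onto X_i along the other summands *)
Definition rho (r : nat) (Xs : 'I_r -> {vspace X}) (i : 'I_r) (x : X) : X :=
  epsilon (inhabits 0) (fun y => exists f : 'I_r -> X,
     [/\ forall j, f j \in Xs j, x = \sum_(j < r) f j & y = f i]).

Definition Ein (B : 'Hom(U, X)) (r : nat) (Xs : 'I_r -> {vspace X}) (i : 'I_r)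
  : U -> Prop := fun u => B u \in Xs i.

Definition in_Gs (r : nat) (Xs : 'I_r -> {vspace X}) (h : X -> R) :=
  (forall x, Rle R0 (h x)) /\
  forall x, h x = \big[Rplus/R0]_(i < r) h (rho Xs i (x)).

Definition noU : U -> Prop := fun _ => True.

Definition fdecomposition A B g r (Xs : 'I_r -> {vspace X}) T :=
  forall x,
    fJstar A B g noU T x = \big[Rplus/R0]_(i < r) fJstar A B g (Ein B Xs i) T (rho Xs i x)
    /\ forall ubar : 'I_r -> nat -> U,
         (forall i, fopt A B g (Ein B Xs i) T (rho Xs i x) (ubar i)) ->
         fopt A B g noU T x (fun t => \sum_(i < r) ubar i t).

Definition idecomposition A B g alpha r (Xs : 'I_r -> {vspace X}) :=
  forall x,
    iJstar A B g alpha noU x = \big[eadd/EFin R0]_(i < r) iJstar A B g alpha (Ein B Xs i) (rho Xs i x)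
    /\ forall ubar : 'I_r -> nat -> U,
         (forall i, iopt A B g alpha (Ein B Xs i) (rho Xs i x) (ubar i)) ->
         iopt A B g alpha noU x (fun t => \sum_(i < r) ubar i t).

End Control.

From Stdlib Require Import Reals ClassicalEpsilon FunctionalExtensionality Lra.
From HB Require Import structures.
From mathcomp Require Import all_boot all_order all_algebra.
Set Implicit Arguments. Unset Strict Implicit. Unset Printing Implicit Defensive.
Import GRing.Theory.

(* If R(B) splits along the X_i, every input splits into inputs of the
   subsystems; trajectories superpose and g is additive over the summands, so
   the cost of a summed policy is the sum of the subproblem costs and
   optimality transfers in both directions.  Conversely, if some component
   rho_i(B u) of an input direction is not reachable inside X_i, start at
   x0 = A^-1 (B u): the original problem steers x0 to 0 in one step at cost
   g(x0) = sum_i g(rho_i x0), whereas the i-th subproblem pays a positive cost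
   at time 1, so the sum of the subproblem optima exceeds J*(x0). *)

HB.instance Definition _ := Monoid.isComLaw.Build R R0 Rplus
  (fun a b c => esym (Rplus_assoc a b c)) Rplus_comm Rplus_0_l.

Lemma eaddA : associative eadd.
Proof. by move=> [a|] [b|] [c|] //=; rewrite Rplus_assoc. Qed.

Lemma eaddC : commutative eadd.
Proof. by move=> [a|] [b|] //=; rewrite Rplus_comm. Qed.

Lemma add0e : left_id (EFin R0) eadd.
Proof. by move=> [a|] //=; rewrite Rplus_0_l. Qed.

HB.instance Definition _ := Monoid.isComLaw.Build ereal (EFin R0) eadd
  eaddA eaddC add0e.

Section RealSums.
Local Open Scope R_scope.

Lemma Rsum_ge0 (I : Type) (s : seq I) (f : I -> R) :
  (forall i, 0 <= f i) -> 0 <= \big[Rplus/R0]_(i <- s) f i.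
Proof. by move=> f0; apply: big_ind => // *; lra. Qed.

Lemma Rsum_le (n : nat) (f h : 'I_n -> R) :
  (forall i, f i <= h i) -> \big[Rplus/R0]_(i < n) f i <= \big[Rplus/R0]_(i < n) h i.
Proof. by move=> fh; apply: big_ind2 => // *; [lra | apply: Rplus_le_compat]. Qed.

Lemma Rsum_lt (n : nat) (f h : 'I_n -> R) i0 :
  (forall i, f i <= h i) -> f i0 < h i0 ->
  \big[Rplus/R0]_(i < n) f i < \big[Rplus/R0]_(i < n) h i.
Proof.
move=> fh fh0; rewrite (bigD1 i0) //= [X in _ < X](bigD1 i0) //=.
by apply: Rplus_lt_le_compat => //; apply: big_ind2 => // *; [lra | apply: Rplus_le_compat].
Qed.

Lemma sum_f_R0_sum (n : nat) (f : 'I_n -> nat -> R) T :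
  sum_f_R0 (fun t => \big[Rplus/R0]_(i < n) f i t) T =
  \big[Rplus/R0]_(i < n) sum_f_R0 (f i) T.
Proof. by elim: T => [|T IH] //=; rewrite IH big_split. Qed.

End RealSums.

Section ExtendedRealSums.
Local Open Scope R_scope.

Lemma ele_anti a b : ele a b -> ele b a -> a = b.
Proof. by case: a => [x|]; case: b => [y|] //= xy yx; rewrite (Rle_antisym _ _ xy yx). Qed.

Lemma ele_trans a b c : ele a b -> ele b c -> ele a c.
Proof. case: a => [x|]; case: b => [y|]; case: c => [z|] //=; lra. Qed.

Lemma ele_sum (n : nat) (f h : 'I_n -> ereal) :
  (forall i, ele (f i) (h i)) ->
  ele (\big[eadd/EFin R0]_(i < n) f i) (\big[eadd/EFin R0]_(i < n) h i).
Proof.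
move=> fh; apply: big_ind2 => //=; first lra.
by move=> [a|] [b|] [c|] [d|] //=; lra.
Qed.

Variant esum_spec (f : nat -> R) : ereal -> Prop :=
  | EsumFin l of Un_cv (fun n => sum_f_R0 f n) l : esum_spec f (EFin l)
  | EsumInf of ~ (exists l, Un_cv (fun n => sum_f_R0 f n) l) : esum_spec f EInf.

Lemma esumP f : esum_spec f (esum f).
Proof.
rewrite /esum; case: excluded_middle_informative => [cvf|ncvf]; last exact: EsumInf.
by case: constructive_indefinite_description => l /= cvl; apply: EsumFin.
Qed.

Lemma esum_cvg f l : Un_cv (fun n => sum_f_R0 f n) l -> esum f = EFin l.
Proof.
move=> cvl; case: esumP => [l' cvl'|ncv]; last by case: ncv; exists l.
by rewrite (UL_sequence _ _ _ cvl' cvl).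
Qed.

Lemma esum_head f : (forall t, f t.+1 = 0) -> esum f = EFin (f 0%N).
Proof.
move=> f0; apply: esum_cvg => e e_gt0; exists 0%N => n _.
suff -> : sum_f_R0 f n = f 0%N by rewrite /R_dist Rminus_diag Rabs_R0.
by elim: n => [|n IH] //=; rewrite IH f0 Rplus_0_r.
Qed.

Lemma esum_ge_partial f n : (forall t, 0 <= f t) -> ele (EFin (sum_f_R0 f n)) (esum f).
Proof.
move=> f0; case: esumP => [l cvl|_] //=.
by apply: (growing_ineq _ _ _ cvl) => m /=; have := f0 m.+1; lra.
Qed.

Lemma series_cvg_le f h : (forall t, 0 <= f t <= h t) ->
  (exists l, Un_cv (fun n => sum_f_R0 h n) l) ->
  exists l, Un_cv (fun n => sum_f_R0 f n) l.
Proof.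
move=> fh [l cvl]; have [l' cvl'] := Rseries_CV_comp f h fh (exist _ l cvl).
by exists l'.
Qed.

Lemma esumD f h : (forall t, 0 <= f t) -> (forall t, 0 <= h t) ->
  esum (fun t => f t + h t) = eadd (esum f) (esum h).
Proof.
move=> f0 h0.
case: (esumP f) => [lf cvf|ncvf]; last first.
  case: esumP => // l cvl; case: ncvf; apply: (series_cvg_le (h := fun t => f t + h t)).
    by move=> t; have := f0 t; have := h0 t; lra.
  by exists l.
case: (esumP h) => [lh cvh|ncvh]; last first.
  case: esumP => // l cvl; case: ncvh; apply: (series_cvg_le (h := fun t => f t + h t)).
    by move=> t; have := f0 t; have := h0 t; lra.
  by exists l.
apply: esum_cvg; have := CV_plus _ _ _ _ cvf cvh.
suff -> : (fun n => sum_f_R0 (fun t => f t + h t) n) =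
          (fun n => sum_f_R0 f n + sum_f_R0 h n) by [].
by apply: functional_extensionality => n; rewrite sum_plus.
Qed.

Lemma esum_sum (I : Type) (s : seq I) (f : I -> nat -> R) : (forall i t, 0 <= f i t) ->
  esum (fun t => \big[Rplus/R0]_(i <- s) f i t) = \big[eadd/EFin R0]_(i <- s) esum (f i).
Proof.
move=> f0; elim: s => [|i s IH].
  by rewrite big_nil (esum_head (f := fun t => _)) => [|t]; rewrite big_nil.
rewrite big_cons -IH -esumD //; last by move=> t; apply: Rsum_ge0.
by congr esum; apply: functional_extensionality => t; rewrite big_cons.
Qed.

End ExtendedRealSums.

Lemma min_of_eq (T : Type) (d : T) (le : T -> T -> Prop) (S : T -> Prop) v :
  (forall a b, le a b -> le b a -> a = b) -> is_min le S v -> min_of d le S = v.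
Proof.
move=> le_anti [Sv v_min]; rewrite /min_of.
have [Sw w_min] := epsilon_spec (inhabits d) (is_min le S) (ex_intro _ v (conj Sv v_min)).
by apply: le_anti; [apply: w_min | apply: v_min].
Qed.

Local Open Scope ring_scope.

Section Projections.
Variables (F : fieldType) (X : vectType F) (r : nat) (Xs : 'I_r -> {vspace X}).
Hypotheses (Xs_direct : directv (\sum_(i < r) Xs i))
  (Xs_full : (\sum_(i < r) Xs i)%VS = fullv).

Lemma rho_eq (f : 'I_r -> X) x i : (forall j, f j \in Xs j) ->
  x = \sum_(j < r) f j -> rho Xs i x = f i.
Proof.
move=> fXs ->; rewrite /rho.
set P := fun y => _.
have P_fi : P (f i) by exists f.
have [f' [f'Xs sumf' ->]] := epsilon_spec (inhabits 0) P (ex_intro _ _ P_fi).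
move/directv_sum_unique: Xs_direct => /(_ f' f (fun j _ => f'Xs j) (fun j _ => fXs j)).
by rewrite sumf' eqxx => /esym/forall_inP/(_ i isT)/eqP.
Qed.

Lemma rho_dec x : exists f : 'I_r -> X, (forall j, f j \in Xs j) /\ x = \sum_(j < r) f j.
Proof.
have : x \in (\sum_(i < r) Xs i)%VS by rewrite Xs_full memvf.
by case/memv_sumP => f fXs ->; exists f; split => // j; apply: fXs.
Qed.

Lemma rho_mem i x : rho Xs i x \in Xs i.
Proof. by have [f [fXs ->]] := rho_dec x; rewrite (rho_eq i fXs erefl). Qed.

Lemma sum_rho x : \sum_(i < r) rho Xs i x = x.
Proof.
have [f [fXs ->]] := rho_dec x.
by apply: eq_bigr => i _; rewrite (rho_eq i fXs erefl).
Qed.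

Lemma rho_comm (L : 'End(X)) i x : (forall j, (L @: Xs j <= Xs j)%VS) ->
  rho Xs i (L x) = L (rho Xs i x).
Proof.
move=> LXs; apply: (rho_eq (f := fun j => L (rho Xs j x))) => [j|].
  by apply: (subvP (LXs j)); apply/memv_img/rho_mem.
by rewrite -linear_sum sum_rho.
Qed.

End Projections.

Section Dynamics.
Variables (F : fieldType) (X U : vectType F) (A : 'End(X)) (B : 'Hom(U, X)).
Variables (r : nat) (Xs : 'I_r -> {vspace X}).
Hypotheses (Xs_direct : directv (\sum_(i < r) Xs i))
  (Xs_full : (\sum_(i < r) Xs i)%VS = fullv) (A_Xs : forall i, (A @: Xs i <= Xs i)%VS).

Lemma traj_sum (x0s : 'I_r -> X) (ubar : 'I_r -> nat -> U) t :
  traj A B (\sum_(i < r) x0s i) (fun s => \sum_(i < r) ubar i s) t =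
  \sum_(i < r) traj A B (x0s i) (ubar i) t.
Proof. by elim: t => [|t IH] //=; rewrite IH !linear_sum -big_split. Qed.

Lemma traj_mem i y w t : y \in Xs i -> (forall s, (s < t)%N -> B (w s) \in Xs i) ->
  traj A B y w t \in Xs i.
Proof.
move=> yXs; elim: t => [|t IH] wXs //=.
rewrite memvD ?wXs //; apply/(subvP (A_Xs i))/memv_img/IH => s s_lt.
by apply/wXs/ltnW.
Qed.

Lemma rho_traj x ubar t : (forall i s, (s < t)%N -> B (ubar i s) \in Xs i) ->
  forall i, rho Xs i (traj A B x (fun s => \sum_(j < r) ubar j s) t) =
            traj A B (rho Xs i x) (ubar i) t.
Proof.
move=> ubarXs i; apply: (rho_eq Xs_direct (f := fun j => traj A B (rho Xs j x) (ubar j) t)) => [j|].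
  by apply/traj_mem/ubarXs/(rho_mem Xs_direct Xs_full).
by rewrite -traj_sum (sum_rho Xs_direct Xs_full).
Qed.

Variables (g : X -> R) (alpha : R).
Hypotheses (g_Gs : in_Gs Xs g) (alpha_ge0 : Rle R0 alpha).

Lemma g_traj x ubar t : (forall i s, (s < t)%N -> B (ubar i s) \in Xs i) ->
  g (traj A B x (fun s => \sum_(j < r) ubar j s) t) =
  \big[Rplus/R0]_(i < r) g (traj A B (rho Xs i x) (ubar i) t).
Proof. by move=> ubarXs; rewrite (proj2 g_Gs); apply: eq_bigr => i _; rewrite rho_traj. Qed.

Lemma fcost_split T x ubar : (forall i, fadm (Ein B Xs i) T (ubar i)) ->
  fcost A B g T x (fun s => \sum_(j < r) ubar j s) =
  \big[Rplus/R0]_(i < r) fcost A B g T (rho Xs i x) (ubar i).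
Proof.
move=> ubar_adm; rewrite /fcost -sum_f_R0_sum; apply: PartSum.sum_eq => t /leP t_le.
by apply: g_traj => i s s_lt; apply/ubar_adm/(leq_trans s_lt t_le).
Qed.

Lemma icost_split x ubar : (forall i, iadm (Ein B Xs i) (ubar i)) ->
  icost A B g alpha x (fun s => \sum_(j < r) ubar j s) =
  \big[eadd/EFin R0]_(i < r) icost A B g alpha (rho Xs i x) (ubar i).
Proof.
move=> ubar_adm; rewrite /icost -esum_sum; last first.
  by move=> i t; apply: Rmult_le_pos; [apply: pow_le | apply: (proj1 g_Gs)].
congr esum; apply: functional_extensionality => t.
rewrite g_traj; last by move=> i s _; apply: ubar_adm.
exact: (big_morph _ (Rmult_plus_distr_l _) (Rmult_0_r _)).
Qed.

End Dynamics.

Section OptimalityTransfer.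
Variables (F : fieldType) (X U : vectType F) (B : 'Hom(U, X)).
Variables (r : nat) (Xs : 'I_r -> {vspace X}).
Hypotheses (Xs_direct : directv (\sum_(i < r) Xs i))
  (Xs_full : (\sum_(i < r) Xs i)%VS = fullv).

(* Both horizons at once: [V] is the value space (R or ereal), [adm P] the
   admissible input sequences under the input constraint [P]. *)
Variables (V : Type) (d : V) (le : V -> V -> Prop) (idx : V) (op : Monoid.com_law idx).
Hypothesis le_anti : forall a b, le a b -> le b a -> a = b.
Hypothesis le_sum : forall f h : 'I_r -> V, (forall i, le (f i) (h i)) ->
  le (\big[op/idx]_(i < r) f i) (\big[op/idx]_(i < r) h i).
Variables (adm : (U -> Prop) -> (nat -> U) -> Prop) (cost : X -> (nat -> U) -> V).
Hypothesis adm_pointwise : forall P w, (forall t, P (w t)) -> adm P w.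
Hypothesis cost_split : forall x ubar, (forall i, adm (Ein B Xs i) (ubar i)) ->
  cost x (fun t => \sum_(i < r) ubar i t) = \big[op/idx]_(i < r) cost (rho Xs i x) (ubar i).

Definition optimal P x u := adm P u /\ forall v, adm P v -> le (cost x u) (cost x v).
Definition optimal_cost P x := min_of d le (fun c => exists u, adm P u /\ c = cost x u).

Lemma optimal_costE P x u : optimal P x u -> optimal_cost P x = cost x u.
Proof.
case=> u_adm u_min; apply: min_of_eq => //; split; first by exists u.
by move=> _ [v [v_adm ->]]; apply: u_min.
Qed.

Lemma optimal_decomposition (input_split : forall u : U, exists v : 'I_r -> U,
                      (forall i, B (v i) \in Xs i) /\ u = \sum_(i < r) v i)
  (sub : forall i x, x \in Xs i -> exists u, optimal (Ein B Xs i) x u) (x : X) :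
  optimal_cost (noU (U:=U)) x = \big[op/idx]_(i < r) optimal_cost (Ein B Xs i) (rho Xs i x) /\
  forall ubar, (forall i, optimal (Ein B Xs i) (rho Xs i x) (ubar i)) ->
    optimal (noU (U:=U)) x (fun t => \sum_(i < r) ubar i t).
Proof.
have [dec decP] := choice _ input_split.
have sum_opt ubar : (forall i, optimal (Ein B Xs i) (rho Xs i x) (ubar i)) ->
    optimal (noU (U:=U)) x (fun t => \sum_(i < r) ubar i t).
  move=> ubar_opt; split=> [|w _]; first exact: adm_pointwise.
  have ubar_adm i : adm (Ein B Xs i) (ubar i) by case: (ubar_opt i).
  have wbar_adm i : adm (Ein B Xs i) (fun t => dec (w t) i).
    by apply: adm_pointwise => t; have [decXs _] := decP (w t); exact: decXs.
  have -> : w = fun t => \sum_(i < r) dec (w t) i.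
    by apply: functional_extensionality => t; have [_ wE] := decP (w t); exact: wE.
  rewrite !cost_split //; apply: le_sum => i.
  exact: (proj2 (ubar_opt i)).
split=> //.
have [ubar ubar_opt] := choice _ (fun i => sub i _ (rho_mem Xs_direct Xs_full i x)).
rewrite (optimal_costE (sum_opt _ ubar_opt)) cost_split => [|i]; last by case: (ubar_opt i).
by apply: eq_bigr => i _; rewrite (optimal_costE (ubar_opt i)).
Qed.

End OptimalityTransfer.

Definition range_decomposes (F : fieldType) (X U : vectType F) (B : 'Hom(U, X))
    (r : nat) (Xs : 'I_r -> {vspace X}) :=
  directv (\sum_(i < r) (limg B :&: Xs i))%VS /\
  limg B = (\sum_(i < r) (limg B :&: Xs i))%VS.

Section RangeDecomposition.
Variables (F : fieldType) (X U : vectType F) (B : 'Hom(U, X)).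
Variables (r : nat) (Xs : 'I_r -> {vspace X}).
Hypotheses (Xs_direct : directv (\sum_(i < r) Xs i))
  (Xs_full : (\sum_(i < r) Xs i)%VS = fullv).

Lemma range_decomposesP :
  range_decomposes B Xs <-> forall u i, rho Xs i (B u) \in limg B.
Proof.
split=> [[_ BXs] u i | rhoB].
  have : B u \in limg B by apply/memv_img/memvf.
  rewrite {1}BXs => /memv_sumP [w wXs ->].
  have wBXs j : w j \in (limg B :&: Xs j)%VS by apply: wXs.
  rewrite (rho_eq Xs_direct (f := w)) // => [|j]; first by case/memv_capP: (wBXs i).
  by case/memv_capP: (wBXs j).
split.
  apply/directv_sum_independent => w wBXs wsum i _.
  move/directv_sum_independent: Xs_direct; apply=> // j _.
  by case/memv_capP: (wBXs j isT).
apply/eqP; rewrite eqEsubv; apply/andP; split; last by apply/subv_sumP => i _; apply: capvSl.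
apply/subvP => _ /memv_imgP [u _ ->].
rewrite -(sum_rho Xs_direct Xs_full (B u)); apply: memv_sumr => i _.
by rewrite memv_cap rhoB (rho_mem Xs_direct Xs_full).
Qed.

Lemma range_decomposes_split : injective B -> range_decomposes B Xs ->
  forall u, exists v : 'I_r -> U, (forall i, B (v i) \in Xs i) /\ u = \sum_(i < r) v i.
Proof.
move=> B_inj /range_decomposesP rhoB u.
have BV i : B ((B^-1)%VF (rho Xs i (B u))) = rho Xs i (B u) by apply/limg_lfunVK/rhoB.
exists (fun i => (B^-1)%VF (rho Xs i (B u))); split=> [i|].
  by rewrite BV (rho_mem Xs_direct Xs_full).
by apply: B_inj; rewrite linear_sum (eq_bigr _ (fun i _ => BV i)) (sum_rho Xs_direct Xs_full).
Qed.

End RangeDecomposition.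

Section Decompositions.
Variables (F : fieldType) (X U : vectType F) (A : 'End(X)) (B : 'Hom(U, X)).
Variables (r : nat) (Xs : 'I_r -> {vspace X}) (g : X -> R) (alpha : R).
Hypotheses (Xs_direct : directv (\sum_(i < r) Xs i))
  (Xs_full : (\sum_(i < r) Xs i)%VS = fullv) (A_Xs : forall i, (A @: Xs i <= Xs i)%VS)
  (g_Gs : in_Gs Xs g).

Lemma fJstarE P T x u : fopt A B g P T x u -> fJstar A B g P T x = fcost A B g T x u.
Proof. exact: (optimal_costE R0 Rle_antisym (adm := fun P => fadm P T)). Qed.

Lemma iJstarE P x u : iopt A B g alpha P x u -> iJstar A B g alpha P x = icost A B g alpha x u.
Proof. exact: (optimal_costE EInf ele_anti (adm := @iadm F U) (cost := icost A B g alpha)). Qed.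

Lemma range_fdecomposition T : injective B -> range_decomposes B Xs ->
  (forall i x, x \in Xs i -> exists u, fopt A B g (Ein B Xs i) T x u) ->
  fdecomposition A B g Xs T.
Proof.
move=> B_inj BXs sub x.
apply: (optimal_decomposition Xs_direct Xs_full R0 Rle_antisym (@Rsum_le r)
          (adm := fun P => fadm P T) (cost := fcost A B g T)) => //.
- by move=> P w wP t _.
- exact: (fcost_split Xs_direct Xs_full A_Xs g_Gs).
- exact: range_decomposes_split.
Qed.

Lemma range_idecomposition : Rle R0 alpha -> injective B -> range_decomposes B Xs ->
  (forall i x, x \in Xs i -> exists u, iopt A B g alpha (Ein B Xs i) x u) ->
  idecomposition A B g alpha Xs.
Proof.
move=> alpha_ge0 B_inj BXs sub x.
apply: (optimal_decomposition Xs_direct Xs_full EInf ele_anti (@ele_sum r)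
          (adm := @iadm F U) (cost := icost A B g alpha)) => //.
- exact: (icost_split Xs_direct Xs_full A_Xs g_Gs alpha_ge0).
- exact: range_decomposes_split.
Qed.

Hypotheses (A_bij : bijective A) (g_def : forall x, g x = R0 <-> x = 0).

Lemma g_pos x : x != 0 -> Rlt R0 (g x).
Proof.
move=> /eqP x_neq0; case: (Rle_lt_or_eq_dec _ _ (proj1 g_Gs x)) => // g0.
by case: x_neq0; apply/g_def.
Qed.

Lemma deadbeat_obstruction u0 i0 : rho Xs i0 (B u0) \notin limg B ->
  exists x0 (u : nat -> U),
    (forall t, traj A B x0 u t.+1 = 0) /\ forall v, A (rho Xs i0 x0) + B v != 0.
Proof.
case: A_bij => Ainv AinvK AKinv rhoB_out.
exists (Ainv (B u0)), (fun t => if t is 0 then - u0 else 0); split.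
  by elim=> [|t /= ->]; rewrite /= ?AKinv ?linearN ?subrr // !linear0 addr0.
move=> v; rewrite -(rho_comm Xs_direct Xs_full _ _ A_Xs) AKinv.
apply: contra rhoB_out => /eqP rhoB_eq.
rewrite (_ : rho Xs i0 (B u0) = B (- v)); first exact/memv_img/memvf.
by rewrite linearN; apply/eqP; rewrite -subr_eq0 opprK rhoB_eq.
Qed.

Lemma fdecomposition_range : fdecomposition A B g Xs 1 ->
  (forall x, exists u, fopt A B g (noU (U:=U)) 1 x u) ->
  (forall i x, x \in Xs i -> exists u, fopt A B g (Ein B Xs i) 1 x u) ->
  range_decomposes B Xs.
Proof.
move=> dec opt sub; apply/(range_decomposesP B Xs_direct Xs_full) => u0 i0.
apply/negPn/negP => /deadbeat_obstruction [x0 [u [u_dead stuck]]].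
have [us us_opt] := opt x0.
have [ubar ubar_opt] := choice _ (fun i => sub i _ (rho_mem Xs_direct Xs_full i x0)).
have upper : Rle (fJstar A B g (noU (U:=U)) 1 x0) (g x0).
  rewrite (fJstarE us_opt); apply: Rle_trans (proj2 us_opt u (fun _ _ => I)) _.
  move: (u_dead 0%N); rewrite /fcost /= => ->.
  by rewrite (proj2 (g_def 0)) // Rplus_0_r; apply: Rle_refl.
have lower : Rlt (g x0) (fJstar A B g (noU (U:=U)) 1 x0).
  rewrite (proj1 (dec x0)) (proj2 g_Gs x0).
  rewrite (eq_bigr _ (fun i _ => fJstarE (ubar_opt i))).
  apply: (Rsum_lt (i0 := i0)) => [i|]; rewrite /fcost /=.
    by have := proj1 g_Gs (A (rho Xs i x0) + B (ubar i 0%N)); lra.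
  by have := g_pos (stuck (ubar i0 0%N)); lra.
lra.
Qed.

Lemma idecomposition_range : Rlt R0 alpha -> idecomposition A B g alpha Xs ->
  (forall x, exists u, iopt A B g alpha (noU (U:=U)) x u) ->
  (forall i x, x \in Xs i -> exists u, iopt A B g alpha (Ein B Xs i) x u) ->
  range_decomposes B Xs.
Proof.
move=> alpha_gt0 dec opt sub; apply/(range_decomposesP B Xs_direct Xs_full) => u0 i0.
apply/negPn/negP => /deadbeat_obstruction [x0 [u [u_dead stuck]]].
have [us us_opt] := opt x0.
have [ubar ubar_opt] := choice _ (fun i => sub i _ (rho_mem Xs_direct Xs_full i x0)).
have upper : ele (iJstar A B g alpha (noU (U:=U)) x0) (EFin (g x0)).
  rewrite (iJstarE us_opt); apply: ele_trans (proj2 us_opt u (fun _ => I)) _.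
  rewrite /icost esum_head => [|t]; first by rewrite /= Rmult_1_l; apply: Rle_refl.
  by rewrite u_dead (proj2 (g_def 0)) // Rmult_0_r.
pose b i := sum_f_R0 (fun t => Rmult (pow alpha t) (g (traj A B (rho Xs i x0) (ubar i) t))) 1.
have lower : ele (EFin (\big[Rplus/R0]_(i < r) b i)) (iJstar A B g alpha (noU (U:=U)) x0).
  rewrite (proj1 (dec x0)) (big_morph EFin (op1 := eadd) (fun _ _ => erefl) erefl).
  apply: ele_sum => i; rewrite (iJstarE (ubar_opt i)); apply: esum_ge_partial => t.
  by apply: Rmult_le_pos; [apply: pow_le; lra | apply: (proj1 g_Gs)].
have gap : Rlt (g x0) (\big[Rplus/R0]_(i < r) b i).
  rewrite (proj2 g_Gs x0); apply: (Rsum_lt (i0 := i0)) => [i|]; rewrite /b /=.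
    have := proj1 g_Gs (A (rho Xs i x0) + B (ubar i 0%N)); nra.
  have := g_pos (stuck (ubar i0 0%N)); nra.
exact: Rlt_not_le _ _ gap (ele_trans lower upper).
Qed.

End Decompositions.

Theorem theorem2 (F : fieldType) (X U : vectType F)
  (A : 'End(X)) (B : 'Hom(U, X)) (r : nat) (Xs : 'I_r -> {vspace X})
  (g : X -> R) (alpha : R) :
  injective B ->
  bijective A ->
  is_decomp A Xs ->
  (forall x, g x = R0 <-> x = 0) ->
  in_Gs Xs g ->
  Rlt R0 alpha -> Rlt alpha R1 ->
  (forall T, (0 < T)%N -> forall x, exists u, fopt A B g (noU (U:=U)) T x u) ->
  (forall T, (0 < T)%N -> forall i x, x \in Xs i ->
     exists u, fopt A B g (Ein B Xs i) T x u) ->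
  (forall x, exists u, iopt A B g alpha (noU (U:=U)) x u) ->
  (forall i x, x \in Xs i -> exists u, iopt A B g alpha (Ein B Xs i) x u) ->
  [/\ (directv (\sum_(i < r) (limg B :&: Xs i))%VS /\
       limg B = (\sum_(i < r) (limg B :&: Xs i))%VS)
      <-> (forall T, (0 < T)%N -> fdecomposition A B g Xs T),
      (directv (\sum_(i < r) (limg B :&: Xs i))%VS /\
       limg B = (\sum_(i < r) (limg B :&: Xs i))%VS)
      <-> idecomposition A B g alpha Xs
    & (forall T, (0 < T)%N -> fdecomposition A B g Xs T)
      <-> idecomposition A B g alpha Xs].
Proof.
move=> B_inj A_bij [_ Xs_direct Xs_full A_Xs] g_def g_Gs alpha_gt0 _ fopt_ex fsub iopt_ex isub.
have a_b : range_decomposes B Xs <-> forall T, (0 < T)%N -> fdecomposition A B g Xs T.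
  split=> [BXs T T_gt0 | fdec].
    exact: (range_fdecomposition Xs_direct Xs_full A_Xs g_Gs B_inj BXs (fsub T T_gt0)).
  exact: (fdecomposition_range Xs_direct Xs_full A_Xs g_Gs A_bij g_def (fdec 1%N isT)
            (fopt_ex 1%N isT) (fsub 1%N isT)).
have a_c : range_decomposes B Xs <-> idecomposition A B g alpha Xs.
  split=> [BXs | idec].
    exact: (range_idecomposition Xs_direct Xs_full A_Xs g_Gs (Rlt_le _ _ alpha_gt0) B_inj BXs isub).
  exact: (idecomposition_range Xs_direct Xs_full A_Xs g_Gs A_bij g_def alpha_gt0 idec iopt_ex isub).
by split=> //; rewrite -a_b.
Qed.
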